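(* Let $T_R:\mathbb{Z}\to\mathbb{Z}$ be defined by $T_R(n)=3n/4$ if $n\equiv 0\pmod 4$, $T_R(n)=(n-2)/4$ if $n\equiv 2\pmod 4$, and $T_R(n)=(3n+1)/2$ if $n$ is odd. Define $T_R^*:\mathbb{Z}\to\mathbb{Z}$ by $T_R^*(n)=T_R(n)$ if $n\equiv 1\pmod 2$ or $n\equiv 0\pmod 4$; $T_R^*(n)=T_R^2(n)$ if $n\equiv 6\pmod 8$ or $n\equiv 2\pmod{16}$; and $T_R^*(n)=T_R^3(n)$ if $n\equiv 26\pmod{32}$, $n\equiv 10\pmod{64}$ or $n\equiv 42\pmod{64}$. Then for every integer $n$, the $T_R^*$-trajectory $((T_R^* )^k(n))_{k\ge0}$ consists of finitely many numbers congruent to $1\pmod 3$ followed only by numbers congruent to $0$ or $2\pmod 3$; that is, there is $K\ge 0$ with $(T_R^* )^k(n)\equiv 1\pmod 3$ for $0\le k<K$ and $(T_R^* )^k(n)\not\equiv 1\pmod 3$ for all $k\ge K$.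
   Context: $T_R^k$ and $(T_R^* )^k$ denote $k$-fold iterates, with the $0$-th iterate the identity. *)

From Stdlib Require Import ZArith Bool.
Open Scope bool_scope.
Open Scope Z_scope.

(* T_R(n) = 3n/4 if n = 0 mod 4; (n-2)/4 if n = 2 mod 4; (3n+1)/2 if n odd.
   All divisions are exact in their respective cases. *)
Definition TR (n : Z) : Z :=
  if n mod 4 =? 0 then 3 * n / 4
  else if n mod 4 =? 2 then (n - 2) / 4
  else (3 * n + 1) / 2.

Definition iterZ (k : nat) (f : Z -> Z) (n : Z) : Z := Nat.iter k f n.

Definition TRstar (n : Z) : Z :=
  if (n mod 2 =? 1) || (n mod 4 =? 0) then TR n
  else if (n mod 8 =? 6) || (n mod 16 =? 2) then iterZ 2 TR n
  else if (n mod 32 =? 26) || (n mod 64 =? 10) || (n mod 64 =? 42) then iterZ 3 TR n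
  else n. (* unreachable: the cases above cover all integers *)

(** On the class [2 mod 4], [T_R] is [n |-> n / 4], so it maps the class [r mod 4m] into
    [r / 4 mod m]. Following the classes through, [T_R^*] ends with a [T_R]-step
    on an odd number or a multiple of 4, landing in [2 mod 3] ([T_R(2m+1) = 3m+2])
    or [0 mod 3] ([T_R(4m) = 3m]), except on the class [42 mod 64], where
    [T_R^* = T_R^3] is [n |-> n / 64] and keeps the residue mod 3 (as [64 = 1 mod 3]).
    Hence the residues [0, 2 mod 3] are never left, and a run of [1 mod 3] stays in
    the class [42 mod 64], where [|n|] strictly decreases, so the run is finite. *)
From Stdlib Require Import ZArith Lia.
Open Scope Z_scope.

Section IterateLeavesPredicate.

Variables (A : Type) (f : A -> A) (P : A -> Prop) (measure : A -> nat).
Hypothesis P_dec : forall x, {P x} + {~ P x}.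
Hypothesis not_P_invariant : forall x, ~ P x -> ~ P (f x).
Hypothesis P_run_decreases : forall x, P x -> P (f x) -> (measure (f x) < measure x)%nat.

Lemma iter_not_P x : ~ P x -> forall k, ~ P (Nat.iter k f x).
Proof.
  intros HPx k; induction k as [|k IH]; [exact HPx|].
  apply not_P_invariant, IH.
Qed.

Lemma iter_P_then_not_P x : exists K : nat,
  (forall k, (k < K)%nat -> P (Nat.iter k f x)) /\
  (forall k, (K <= k)%nat -> ~ P (Nat.iter k f x)).
Proof.
  induction x as [x IH] using (induction_ltof1 A measure).
  destruct (P_dec x) as [HPx|HPx].
  2:{ exists 0%nat; split; [lia|]. intros k _; exact (iter_not_P x HPx k). }
  destruct (P_dec (f x)) as [HPfx|HPfx].
  - destruct (IH (f x) (P_run_decreases x HPx HPfx)) as [K [Hbefore Hafter]].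
    exists (S K); split.
    + intros [|k] Hk; [exact HPx|]. rewrite Nat.iter_succ_r. apply Hbefore; lia.
    + intros [|k] Hk; [lia|]. rewrite Nat.iter_succ_r. apply Hafter; lia.
  - exists 1%nat; split.
    + intros k Hk. replace k with 0%nat by lia. exact HPx.
    + intros [|k] Hk; [lia|]. rewrite Nat.iter_succ_r. exact (iter_not_P _ HPfx k).
Qed.

End IterateLeavesPredicate.

Lemma TR_mod4_2 n : n mod 4 = 2 -> TR n = n / 4.
Proof.
  intros Hn; unfold TR; rewrite Hn; simpl.
  Z.div_mod_to_equations; lia.
Qed.

Lemma TR_mod_of_mod4_2 n m r :
  0 < m -> n mod (4 * m) = r -> r mod 4 = 2 -> TR n mod m = r / 4.
Proof.
  intros Hm Hr Hr4.
  assert (Hn4 : n mod 4 = 2).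
  { rewrite <- (Z.mod_mod_divide n (4 * m) 4), Hr; [exact Hr4|].
    exists m; ring. }
  rewrite TR_mod4_2 by exact Hn4.
  rewrite Z.rem_mul_r, Hn4 in Hr by lia.
  subst r; Z.div_mod_to_equations; lia.
Qed.

Lemma TR_mod3_ne1 n : n mod 2 = 1 \/ n mod 4 = 0 -> TR n mod 3 <> 1.
Proof.
  unfold TR.
  destruct (Z.eqb_spec (n mod 4) 0), (Z.eqb_spec (n mod 4) 2);
    Z.div_mod_to_equations; lia.
Qed.

Lemma TRstar_cases n :
  (n mod 2 = 1 \/ n mod 4 = 0) /\ TRstar n = TR n \/
  (n mod 8 = 6 \/ n mod 16 = 2) /\ TRstar n = TR (TR n) \/
  (n mod 32 = 26 \/ n mod 64 = 10 \/ n mod 64 = 42) /\ TRstar n = TR (TR (TR n)).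
Proof.
  unfold TRstar, iterZ; simpl.
  destruct (Z.eqb_spec (n mod 2) 1); cbn [orb]; [intuition|].
  destruct (Z.eqb_spec (n mod 4) 0); cbn [orb]; [intuition|].
  destruct (Z.eqb_spec (n mod 8) 6); cbn [orb]; [intuition|].
  destruct (Z.eqb_spec (n mod 16) 2); cbn [orb]; [intuition|].
  destruct (Z.eqb_spec (n mod 32) 26); cbn [orb]; [intuition|].
  destruct (Z.eqb_spec (n mod 64) 10); cbn [orb]; [intuition|].
  destruct (Z.eqb_spec (n mod 64) 42); cbn [orb]; [intuition|].
  exfalso; Z.div_mod_to_equations; lia.
Qed.

Lemma TRstar_mod3_ne1 n : n mod 64 <> 42 -> TRstar n mod 3 <> 1.
Proof.
  intros Hn42.
  destruct (TRstar_cases n)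
    as [[Hn ->] | [[[Hn | Hn] ->] | [[Hn | [Hn | Hn]] ->]]];
    apply TR_mod3_ne1.
  - exact Hn.
  - left; exact (TR_mod_of_mod4_2 n 2 6 ltac:(lia) Hn eq_refl).
  - right; exact (TR_mod_of_mod4_2 n 4 2 ltac:(lia) Hn eq_refl).
  - left; apply (TR_mod_of_mod4_2 _ 2 6); [lia | | reflexivity].
    exact (TR_mod_of_mod4_2 n 8 26 ltac:(lia) Hn eq_refl).
  - right; apply (TR_mod_of_mod4_2 _ 4 2); [lia | | reflexivity].
    exact (TR_mod_of_mod4_2 n 16 10 ltac:(lia) Hn eq_refl).
  - contradiction.
Qed.

Lemma TRstar_mod64_42 n : n mod 64 = 42 -> TRstar n = n / 64.
Proof.
  intros Hn.
  destruct (TRstar_cases n) as [[Hcase _] | [[Hcase _] | [_ ->]]];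
    [exfalso; Z.div_mod_to_equations; lia .. |].
  rewrite (TR_mod4_2 n), (TR_mod4_2 (n / 4)), (TR_mod4_2 (n / 4 / 4)), !Z.div_div
    by (Z.div_mod_to_equations; lia).
  reflexivity.
Qed.

Lemma TRstar_mod3_ne1_preserved n : n mod 3 <> 1 -> TRstar n mod 3 <> 1.
Proof.
  intros Hn3.
  destruct (Z.eq_dec (n mod 64) 42) as [Hn | Hn].
  - rewrite TRstar_mod64_42 by exact Hn.
    Z.div_mod_to_equations; lia.
  - exact (TRstar_mod3_ne1 n Hn).
Qed.

Lemma TRstar_abs_lt_of_mod3_1 n :
  TRstar n mod 3 = 1 -> (Z.abs_nat (TRstar n) < Z.abs_nat n)%nat.
Proof.
  intros Hstar.
  destruct (Z.eq_dec (n mod 64) 42) as [Hn | Hn].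
  - rewrite TRstar_mod64_42 by exact Hn.
    apply Nat2Z.inj_lt; rewrite !Nat2Z.inj_abs_nat.
    Z.div_mod_to_equations; lia.
  - exfalso; exact (TRstar_mod3_ne1 n Hn Hstar).
Qed.

Theorem theorem3 : forall n : Z, exists K : nat,
  (forall k : nat, (k < K)%nat -> iterZ k TRstar n mod 3 = 1) /\
  (forall k : nat, (K <= k)%nat -> iterZ k TRstar n mod 3 <> 1).
Proof.
  intros n.
  exact (iter_P_then_not_P Z TRstar (fun x => x mod 3 = 1) Z.abs_nat
           (fun x => Z.eq_dec (x mod 3) 1) TRstar_mod3_ne1_preserved
           (fun x _ => TRstar_abs_lt_of_mod3_1 x) n).
Qed.
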